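(* Let $S$ be a nonempty set of graphs on $\Pi$, $A$ the closed-above model generated by $S$, and $r>0$. Then $\mathrm{eqdom}(S^r)$-set agreement is solvable in $r$ rounds on $A$.
   Context: Fix $\Pi=\{p_1,\dots,p_n\}$. A graph is a directed graph on $\Pi$ containing all self-loops; $Out_G(p)=\{q:(p,q)\in E(G)\}$, $In_G(p)=\{q:(q,p)\in E(G)\}$, $Out_G(P)=\bigcup_{p\in P}Out_G(p)$. Computation proceeds in failure-free, communication-closed rounds: in round $r$ a graph $G_r$ is chosen and each $p$ receives the round-$r$ messages of the processes in $In_{G_r}(p)$. $\uparrow G=\{H:E(H)\supseteq E(G)\}$; the closed-above model generated by $S$ allows exactly the executions whose round graphs each lie in $\bigcup_{G\in S}\uparrow G$. In $k$-set agreement each process starts with an input from a totally ordered set $V_{in}$ and must decide a value so that every decided value is some process's input and at most $k$ distinct values are decided; it is solvable in $r$ rounds if some algorithm guarantees this, with all processes deciding after $r$ rounds, in every allowed execution and input assignment. $\mathrm{eqdom}(G)=\min\{i\in[1,n]:\forall P\subseteq\Pi,\ |P|=i\Rightarrow Out_G(P)=\Pi\}$ and $\mathrm{eqdom}(S)=\max_{G\in S}\mathrm{eqdom}(G)$. The graph path product $G\otimes H$ has edge set $\{(u,v):\exists w,\ (u,w)\in E(G)\wedge(w,v)\in E(H)\}$, and $S^r=\{G_1\otimes\cdots\otimes G_r: G_1,\dots,G_r\in S\}$. *)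

From HB Require Import structures.
From mathcomp Require Import all_boot all_order.
Set Implicit Arguments. Unset Strict Implicit. Unset Printing Implicit Defensive.

(* Processes Pi = 'I_n.  A (candidate) graph is a set of directed edges. *)
Definition graph (n : nat) := {set 'I_n * 'I_n}.

Definition is_graph n (G : graph n) : Prop := forall p : 'I_n, (p, p) \in G.

Definition Out n (G : graph n) (p : 'I_n) : {set 'I_n} := [set q | (p, q) \in G].
Definition In_ n (G : graph n) (p : 'I_n) : {set 'I_n} := [set q | (q, p) \in G].
Definition OutS n (G : graph n) (P : {set 'I_n}) : {set 'I_n} :=
  \bigcup_(p in P) Out G p.

Definition dominating n (G : graph n) (i : nat) : bool :=
  [forall P : {set 'I_n}, (#|P| == i) ==> (OutS G P == setT)].

(* eqdom(G) = min { i in [1,n] | dominating G i }  (default n, which always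
   dominates when G contains all self-loops) *)
Definition eqdom n (G : graph n) : nat :=
  \big[minn/n]_(1 <= i < n.+1 | dominating G i) i.

Definition eqdomS n (S : {set graph n}) : nat := \max_(G in S) eqdom G.

Definition gprod n (G H : graph n) : graph n :=
  [set uv | [exists w, ((uv.1, w) \in G) && ((w, uv.2) \in H)]].

Definition idgraph n : graph n := [set uv | uv.1 == uv.2].

Fixpoint gpow n (S : {set graph n}) (r : nat) : {set graph n} :=
  match r with
  | 0 => [set idgraph n]
  | r'.+1 => [set gprod G H | G in gpow S r', H in S]
  end.

(* closed-above model generated by S: round graph of round t (t >= 1)
   is Gs t, which must lie above some graph of S *)
Definition allowed n (S : {set graph n}) (Gs : nat -> graph n) : Prop :=
  forall t, 0 < t -> exists2 G, G \in S & G \subset Gs t.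

Record algorithm (n : nat) (V : Type) := Alg {
  St : Type;
  Msg : Type;
  init : 'I_n -> V -> St;
  send : nat -> 'I_n -> 'I_n -> St -> Msg;      (* round, sender, receiver *)
  step : nat -> 'I_n -> St -> ('I_n -> option Msg) -> St;
                                                (* round, process, state, received *)
  decide : 'I_n -> St -> V
}.

Fixpoint run n V (A : algorithm n V) (x : 'I_n -> V) (Gs : nat -> graph n)
    (t : nat) : 'I_n -> @St _ _ A :=
  match t with
  | 0 => fun p => @init _ _ A p (x p)
  | t'.+1 =>
      let s := run A x Gs t' in
      fun p => @step _ _ A t'.+1 p (s p)
        (fun q => if q \in In_ (Gs t'.+1) p then Some (@send _ _ A t'.+1 q p (s q))
                  else None)
  end.

Definition decision n V (A : algorithm n V) x Gs r (p : 'I_n) : V :=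
  @decide _ _ A p (run A x Gs r p).

Definition kset_solvable (d : Order.disp_t) (V : orderType d) n
    (S : {set graph n}) (k r : nat) : Prop :=
  exists A : algorithm n V,
    forall (Gs : nat -> graph n), allowed S Gs ->
    forall x : 'I_n -> V,
      (forall p, exists q, decision A x Gs r p = x q) /\
      size (undup [seq decision A x Gs r p | p <- enum 'I_n]) <= k.

From HB Require Import structures.
From mathcomp Require Import all_boot all_order.
Import Order.TTheory.

Set Implicit Arguments.
Unset Strict Implicit.
Unset Printing Implicit Defensive.

(* Flooding solves the problem: every process forwards all inputs it knows and
   finally decides the least one.  The round graphs of an allowed execution lie
   above G_1, ..., G_r in S, so after r rounds process p knows the input of every
   q with (q, p) in H = G_1 (x) ... (x) G_r, an element of S^r.  Let v be the
   largest decision.  Every other decision is the input of a process whose input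
   is below v; if there were eqdom(H) such processes, some of them would be an
   H-in-neighbour of a process deciding v, which therefore knows a smaller input.
   Hence there are at most eqdom(H) <= eqdom(S^r) decisions. *)

Lemma gprod_graph n (G H : graph n) :
  is_graph G -> is_graph H -> is_graph (gprod G H).
Proof.
by move=> G_refl H_refl p; rewrite inE; apply/existsP; exists p; rewrite G_refl H_refl.
Qed.

Lemma gpow_graph n (S : {set graph n}) t :
  (forall G, G \in S -> is_graph G) -> forall H, H \in gpow S t -> is_graph H.
Proof.
move=> S_graph; elim: t => [|t IHt] H /=.
  by rewrite inE => /eqP -> p; rewrite inE eqxx.
by case/imset2P=> G G' /IHt G_graph /S_graph G'_graph ->; apply: gprod_graph.
Qed.

Lemma dominating_n n (G : graph n) : is_graph G -> dominating G n.
Proof.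
move=> G_refl; apply/forallP=> P; apply/implyP=> /eqP card_P.
have P_full : P = [set: 'I_n].
  by apply/eqP; rewrite eqEcard subsetT cardsT card_ord card_P leqnn.
by apply/eqP/setP=> p; rewrite inE; apply/bigcupP; exists p; rewrite ?P_full inE.
Qed.

Lemma dominating_eqdom n (G : graph n) : is_graph G -> dominating G (eqdom G).
Proof.
move=> G_refl; apply: (big_ind (dominating G)) => [|i j|//].
  exact: dominating_n.
by rewrite /minn; case: ifP.
Qed.

Lemma dominating_in_neighbour n (G : graph n) k (T : {set 'I_n}) :
  dominating G k -> k <= #|T| -> forall p, exists2 q, q \in T & (q, p) \in G.
Proof.
move=> /forallP dom_k le_k_T p.
have : 0 < #|[set P : {set 'I_n} | P \subset T & #|P| == k]|.
  by rewrite cards_draws bin_gt0.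
case/card_gt0P=> P; rewrite inE => /andP[sub_PT card_P].
have : p \in OutS G P by move/implyP: (dom_k P) => /(_ card_P) /eqP ->; rewrite inE.
by case/bigcupP=> q q_P; rewrite inE => Gqp; exists q; first exact: (subsetP sub_PT).
Qed.

Section DistinctValues.
Variables (d : Order.disp_t) (V : orderType d) (T : finType).

(* Every value of f other than vm is a value of x below vm. *)
Lemma size_undup_le_below (f x : T -> V) (vm : V) :
  (forall p, f p <= vm)%O -> {subset codom f <= codom x} ->
  size (undup [seq f p | p <- enum T]) <= #|[set q | x q < vm]%O|.+1.
Proof.
move=> le_f_vm f_x; rewrite cardE -(size_map x).
apply: (@uniq_leq_size _ _ (vm :: _) (undup_uniq _)) => v.
rewrite mem_undup => /mapP[p _ ->].
rewrite inE; have [// | ne_fp_vm] := eqVneq (f p) vm.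
have /codomP[q fp_xq] : f p \in codom x by apply: f_x; apply: codom_f.
rewrite fp_xq /=; apply: map_f.
by rewrite mem_enum inE -fp_xq lt_neqAle le_f_vm andbT.
Qed.

End DistinctValues.

Section Flooding.
Variables (n : nat) (d : Order.disp_t) (V : orderType d).

(* A state is the process's own input together with the other inputs heard of. *)
Definition know (s : V * seq V) : seq V := s.1 :: s.2.

Definition flood : algorithm n V :=
  @Alg n V (V * seq V)%type (seq V)
    (fun _ v => (v, [::]))
    (fun _ _ _ s => know s)
    (fun _ _ s recv => (s.1, s.2 ++ flatten [seq odflt [::] (recv q) | q <- enum 'I_n]))
    (fun _ s => \big[Order.min/s.1]_(w <- s.2) w).

Variables (x : 'I_n -> V) (Gs : nat -> graph n).

Local Notation state t := (run flood x Gs t).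

Lemma mem_know_step t p w :
  (w \in know (state t.+1 p)) =
  (w \in know (state t p))
  || [exists q, ((q, p) \in Gs t.+1) && (w \in know (state t q))].
Proof.
rewrite /know /= -cat_cons mem_cat; congr orb.
apply/flattenP/existsP=> [[ws /mapP[q _ ->]] | [q /andP[Gqp w_q]]].
  by rewrite inE; case: ifP => //= Gqp w_q; exists q; rewrite Gqp.
by exists (know (state t q)); [apply/mapP; exists q; rewrite ?mem_enum ?inE ?Gqp|].
Qed.

Lemma know_inputs t p : {subset know (state t p) <= codom x}.
Proof.
elim: t p => [p w | t IHt p w]; first by rewrite inE => /eqP ->; apply: codom_f.
rewrite mem_know_step => /orP[/IHt // | /existsP[q /andP[_ /IHt //]]].
Qed.

Lemma know_flood (S : {set graph n}) : allowed S Gs -> forall t,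
  exists2 H, H \in gpow S t & forall p q, (q, p) \in H -> x q \in know (state t p).
Proof.
move=> Gs_allowed; elim=> [|t [H H_St know_H]].
  exists (idgraph n); first by rewrite inE.
  by move=> p q; rewrite inE /= => /eqP ->; rewrite inE eqxx.
have [G G_S sub_G] := Gs_allowed t.+1 isT.
exists (gprod H G); first exact: imset2_f.
move=> p q; rewrite inE => /existsP[w /andP[Hqw Gwp]].
rewrite mem_know_step; apply/orP; right; apply/existsP; exists w.
by rewrite (subsetP sub_G) //= know_H.
Qed.

Lemma decision_flood_mem t p : decision flood x Gs t p \in know (state t p).
Proof.
rewrite /decision /= big_seq.
apply: (big_ind (fun v => v \in know (state t p))) => [|v w|w w_s].
- by rewrite inE eqxx.
- by rewrite /Order.min; case: ifP.
- by rewrite inE w_s orbT.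
Qed.

Lemma decision_flood_le t p w :
  w \in know (state t p) -> (decision flood x Gs t p <= w)%O.
Proof.
rewrite inE => /orP[/eqP -> | w_s]; first exact: bigmin_le_id.
exact: (ge_bigmin_seq _ _ predT).
Qed.

End Flooding.

Theorem theorem7 (n : nat) (d : Order.disp_t) (V : orderType d)
    (S : {set graph n}) (r : nat) :
  0 < n ->
  S != set0 ->
  (forall G, G \in S -> is_graph G) ->
  0 < r ->
  kset_solvable V S (eqdomS (gpow S r)) r.
Proof.
move=> n_gt0 _ S_graph _; exists (@flood n d V) => Gs Gs_allowed x.
set f := decision (@flood n d V) x Gs r.
have f_input p : f p \in codom x by exact: know_inputs (decision_flood_mem x Gs r p).
split=> [p | ]; first by have /codomP[q ->] := f_input p; exists q.
have [H H_Sr know_H] := know_flood x Gs_allowed r.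
have [pm _ pm_max] := @arg_maxP _ _ 'I_n (Ordinal n_gt0) predT f isT.
have f_max p : (f p <= f pm)%O := pm_max p isT.
have f_sub_x : {subset codom f <= codom x} by move=> _ /codomP[p ->].
apply: leq_trans (size_undup_le_below f_max f_sub_x) _.
apply: leq_trans (leq_bigmax_cond _ H_Sr).
rewrite ltnNge; apply/negP.
move/(dominating_in_neighbour (dominating_eqdom (gpow_graph S_graph H_Sr))).
case/(_ pm)=> q; rewrite inE => xq_lt Hqp.
by have := decision_flood_le (know_H _ _ Hqp); rewrite leNgt xq_lt.
Qed.
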